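(* For any sample $(x,u)$, generative parameters $\theta=(f,T,\lambda)$, inference parameters $\phi$, and $\alpha\in[0,1]$, $$\mathrm{ELBO}_{\theta,\phi}(\alpha;x,u)=\alpha\,\mathrm{ELBO}_{\theta,\phi}(1;x,u)+(1-\alpha)\,\mathrm{ELBO}_{\theta,\phi}(0;x,u)+\alpha\,\mathcal{D}^{1-\alpha}_{\mathrm{Skew}}\big(q_\phi(\cdot|x)\,\|\,q_\phi(\cdot|x,u)\big)+(1-\alpha)\,\mathcal{D}^{\alpha}_{\mathrm{Skew}}\big(q_\phi(\cdot|x,u)\,\|\,q_\phi(\cdot|x)\big),$$ where $\mathcal{D}^{\beta}_{\mathrm{Skew}}(p\|q):=\mathcal{D}_{\mathrm{KL}}\big(p\,\|\,(1-\beta)p+\beta q\big)$.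
   Context: Observations $x\in\mathbb{R}^{d_X}$, covariates $u\in\mathbb{R}^{d_U}$, latents $z\in\mathbb{R}^{d_Z}$, $d_Z<d_X$. Generative parameters $\theta=(f,T,\lambda)$: mixing function $f:\mathbb{R}^{d_Z}\to\mathbb{R}^{d_X}$, label prior density $p_{T,\lambda}(z|u)=\prod_{i=1}^{d_Z}\exp(\lambda_i(u)\cdot T_i(z_i)-A(u)+B(z_i))$ (conditionally factorial exponential family with known $A,B$), decoder density $p_f(x|z)=p_\epsilon(x-f(z))$ for a fixed noise density $p_\epsilon$. Inference parameters $\phi$ determine an encoder density $q_\phi(z|x)$ and a posterior density $q_\phi(z|x,u)$ on $\mathbb{R}^{d_Z}$. For $\alpha\in[0,1]$, with $m_\alpha=\alpha q_\phi(\cdot|x)+(1-\alpha)q_\phi(\cdot|x,u)$, $\mathrm{ELBO}_{\theta,\phi}(\alpha;x,u)=\mathbb{E}_{z\sim m_\alpha}\log p_f(x|z)-\mathcal{D}_{\mathrm{KL}}(m_\alpha\|p_{T,\lambda}(\cdot|u))$. All expectations and divergences appearing are assumed finite. *)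

From HB Require Import structures.
From mathcomp Require Import all_boot all_order all_algebra.
From mathcomp Require Import all_classical all_reals all_analysis.
Set Implicit Arguments. Unset Strict Implicit. Unset Printing Implicit Defensive.
Import Order.TTheory GRing.Theory Num.Theory.
Local Open Scope ring_scope.
Local Open Scope classical_set_scope.

Section Defs.
Variable R : realType.

(* R^n is represented by n.-tuple R (which carries the product sigma-algebra
   of the Borel sigma-algebra on R). *)

(* A measure on R^n is the Lebesgue measure iff it gives every closed box its
   volume (this determines it uniquely). *)
Definition is_lebesgue (n : nat) (mu : set (n.-tuple R) -> \bar R) : Prop :=
  forall a b : n.-tuple R, (forall i, tnth a i <= tnth b i) ->
    mu [set z | forall i, tnth a i <= tnth z i <= tnth b i] =
    (\prod_(i < n) (tnth b i - tnth a i))%:E.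

Definition is_density (n : nat) (mu : {measure set (n.-tuple R) -> \bar R})
  (p : n.-tuple R -> R) : Prop :=
  [/\ measurable_fun setT p, (forall z, 0 <= p z) &
      (\int[mu]_z (p z)%:E = 1)%E].

Definition elog (a : R) : \bar R := if 0 < a then (ln a)%:E else -oo%E.

Definition tsub n (x y : n.-tuple R) : n.-tuple R :=
  [tuple tnth x i - tnth y i | i < n].

Definition dot k (a b : k.-tuple R) : R := \sum_(j < k) tnth a j * tnth b j.

Definition prior_density (dZ dU k : nat)
  (T : 'I_dZ -> R -> k.-tuple R) (lam : 'I_dZ -> dU.-tuple R -> k.-tuple R)
  (A : dU.-tuple R -> R) (B : R -> R) (u : dU.-tuple R) (z : dZ.-tuple R) : R :=
  \prod_(i < dZ) expR (dot (lam i u) (T i (tnth z i)) - A u + B (tnth z i)).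

Definition decoder_density (dZ dX : nat) (peps : dX.-tuple R -> R)
  (f : dZ.-tuple R -> dX.-tuple R) (x : dX.-tuple R) (z : dZ.-tuple R) : R :=
  peps (tsub x (f z)).

Definition expect_integrand n (m : n.-tuple R -> R) (h : n.-tuple R -> \bar R)
  (z : n.-tuple R) : \bar R := ((m z)%:E * h z)%E.

Definition expect n (mu : {measure set (n.-tuple R) -> \bar R})
  (m : n.-tuple R -> R) (h : n.-tuple R -> \bar R) : \bar R :=
  (\int[mu]_z expect_integrand m h z)%E.

Definition KL_integrand n (p q : n.-tuple R -> R) (z : n.-tuple R) : \bar R :=
  ((p z)%:E * (elog (p z) - elog (q z)))%E.

Definition KL n (mu : {measure set (n.-tuple R) -> \bar R})
  (p q : n.-tuple R -> R) : \bar R := (\int[mu]_z KL_integrand p q z)%E.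

Definition mixture n (a : R) (p q : n.-tuple R -> R) (z : n.-tuple R) : R :=
  a * p z + (1 - a) * q z.

Definition Dskew n (mu : {measure set (n.-tuple R) -> \bar R}) (beta : R)
  (p q : n.-tuple R -> R) : \bar R := KL mu p (mixture (1 - beta) p q).

Definition ELBO (dX dZ dU k : nat) (muZ : {measure set (dZ.-tuple R) -> \bar R})
  (peps : dX.-tuple R -> R) (f : dZ.-tuple R -> dX.-tuple R)
  (T : 'I_dZ -> R -> k.-tuple R) (lam : 'I_dZ -> dU.-tuple R -> k.-tuple R)
  (A : dU.-tuple R -> R) (B : R -> R)
  (qenc qpost : dZ.-tuple R -> R) (alpha : R)
  (x : dX.-tuple R) (u : dU.-tuple R) : \bar R :=
  (expect muZ (mixture alpha qenc qpost)
     (fun z => elog (decoder_density peps f x z))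
   - KL muZ (mixture alpha qenc qpost) (prior_density T lam A B u))%E.

End Defs.

(* Mixing the two variational posteriors with weight alpha makes the
   reconstruction term affine in alpha, while the KL term to the prior splits
   as  KL(m || r) = a KL(p || r) + (1 - a) KL(q || r)
                    - a KL(p || m) - (1 - a) KL(q || m)  for  m = a p + (1 - a) q,
   because the cross terms  a p log m + (1 - a) q log m  recombine into
   m log m.  The two compensating divergences are the skew divergences. *)
From HB Require Import structures.
From mathcomp Require Import all_boot all_order all_algebra.
From mathcomp Require Import all_classical all_reals all_analysis.
From mathcomp Require Import ring lra.
Import Order.TTheory GRing.Theory Num.Theory.
Local Open Scope ring_scope.
Local Open Scope classical_set_scope.

Section Mixture.
Variables (R : realType) (n : nat) (p q : n.-tuple R -> R).

Lemma mixture1 : mixture 1 p q = p.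
Proof. by apply: funext => z; rewrite /mixture subrr mul0r addr0 mul1r. Qed.

Lemma mixture0 : mixture 0 p q = q.
Proof. by apply: funext => z; rewrite /mixture subr0 mul0r add0r mul1r. Qed.

Lemma mixtureC (a : R) : mixture (1 - a) q p = mixture a p q.
Proof. by apply: funext => z; rewrite /mixture; ring. Qed.

Lemma mixture1B (a : R) : mixture (1 - (1 - a)) p q = mixture a p q.
Proof. by rewrite opprB addrC subrK. Qed.

End Mixture.

Lemma prior_density_gt0 (R : realType) (dZ dU k : nat)
  (T : 'I_dZ -> R -> k.-tuple R) (lam : 'I_dZ -> dU.-tuple R -> k.-tuple R)
  (A : dU.-tuple R -> R) (B : R -> R) (u : dU.-tuple R) (z : dZ.-tuple R) :
  0 < prior_density T lam A B u z.
Proof. by apply: prodr_gt0 => i _; exact: expR_gt0. Qed.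

Section ElogTerms.
Context {R : realType}.

Lemma elogE (a : R) : 0 < a -> elog a = (ln a)%:E.
Proof. by move=> a0; rewrite /elog a0. Qed.

Lemma mul_elogBE (P X : R) : 0 <= P ->
  (P%:E * (elog P - X%:E))%E = (P * (ln P - X))%:E.
Proof.
rewrite le_eqVlt => /orP[/eqP<-|P0]; first by rewrite mul0e mul0r.
by rewrite elogE // -EFinB -EFinM.
Qed.

(* [elog M] may be [-oo] only where the weight [a] or the density [P] vanishes,
   and there the term is [0] since [0 * x = 0] in [\bar R]. *)
Lemma scale_mul_elogBE (a P M : R) : 0 <= a -> 0 <= P ->
  (0 < a -> 0 < P -> 0 < M) ->
  (a%:E * (P%:E * (elog P - elog M)))%E = (a * (P * (ln P - ln M)))%:E.
Proof.
rewrite le_eqVlt => /orP[/eqP<- _ _|a0]; first by rewrite mul0e mul0r.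
rewrite le_eqVlt => /orP[/eqP<- _|P0 M0]; first by rewrite mul0e mule0 mul0r mulr0.
by rewrite [elog M]elogE ?M0 // mul_elogBE ?ltW // -EFinM.
Qed.

End ElogTerms.

Lemma fin_num_combinationB (R : numDomainType) (a b : R) (e1 e0 k1 k0 d1 d0 : \bar R) :
  e1 \is a fin_num -> e0 \is a fin_num -> k1 \is a fin_num ->
  k0 \is a fin_num -> d1 \is a fin_num -> d0 \is a fin_num ->
  ((a%:E * e1 + b%:E * e0) - ((a%:E * k1 + b%:E * k0) - (a%:E * d1 + b%:E * d0)) =
   a%:E * (e1 - k1) + b%:E * (e0 - k0) + a%:E * d1 + b%:E * d0)%E.
Proof.
case: e1 => // e1 _; case: e0 => // e0 _; case: k1 => // k1 _.
case: k0 => // k0 _; case: d1 => // d1 _; case: d0 => // d0 _.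
by rewrite -!EFinM -!EFinB -!EFinD -?EFinM -?EFinB -?EFinD; congr EFin; ring.
Qed.

Section MixtureIntegrals.
Variables (R : realType) (n : nat) (mu : {measure set (n.-tuple R) -> \bar R}).
Variables (a : R) (p q : n.-tuple R -> R).
Hypotheses (a01 : 0 <= a <= 1) (p0 : forall z, 0 <= p z) (q0 : forall z, 0 <= q z).

Let m := mixture a p q.

Lemma integral_combination (g h : n.-tuple R -> \bar R) :
  mu.-integrable setT g -> mu.-integrable setT h ->
  (\int[mu]_z (a%:E * g z + (1 - a)%:E * h z) =
   a%:E * \int[mu]_z g z + (1 - a)%:E * \int[mu]_z h z)%E.
Proof.
move=> ig ih.
by rewrite integralD //; [rewrite !integralZl|exact: integrableZl|exact: integrableZl].
Qed.

Lemma expect_mixture (h : n.-tuple R -> \bar R) :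
  mu.-integrable setT (expect_integrand p h) ->
  mu.-integrable setT (expect_integrand q h) ->
  expect mu m h = (a%:E * expect mu p h + (1 - a)%:E * expect mu q h)%E.
Proof.
move=> ip iq; rewrite /expect -integral_combination //.
apply: eq_integral => z _; case/andP: a01 => a0 a1.
rewrite /expect_integrand /m /mixture EFinD ge0_muleDl ?EFinM ?muleA //.
  by rewrite lee_fin mulr_ge0.
by rewrite lee_fin mulr_ge0 // subr_ge0.
Qed.

Lemma KL_integrand_mixture (r : n.-tuple R -> R) z : 0 < r z ->
  KL_integrand m r z =
  ((a%:E * KL_integrand p r z + (1 - a)%:E * KL_integrand q r z) -
   (a%:E * KL_integrand p m z + (1 - a)%:E * KL_integrand q m z))%E.
Proof.
move=> r0; case/andP: a01 => a0 a1; have a1' : 0 <= 1 - a by rewrite subr_ge0.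
have m0 : 0 <= m z by rewrite /m /mixture; apply: addr_ge0; apply: mulr_ge0.
have mP : 0 < a -> 0 < p z -> 0 < m z.
  move=> ha hp; have := mulr_gt0 ha hp; have := mulr_ge0 a1' (q0 z).
  by rewrite /m /mixture; lra.
have mQ : 0 < 1 - a -> 0 < q z -> 0 < m z.
  move=> ha hq; have := mulr_gt0 ha hq; have := mulr_ge0 a0 (p0 z).
  by rewrite /m /mixture; lra.
rewrite /KL_integrand [elog (r z)]elogE // !mul_elogBE //.
rewrite (@scale_mul_elogBE _ _ _ _ a0 (p0 z) mP) (@scale_mul_elogBE _ _ _ _ a1' (q0 z) mQ).
rewrite -!EFinM -!EFinD; congr EFin.
move: (ln (m z)) (ln (r z)) (ln (p z)) (ln (q z)) => lm lr lp lq.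
have -> : m z = a * p z + (1 - a) * q z by [].
by move: (p z) (q z) => P Q; ring.
Qed.

Lemma KL_mixture (r : n.-tuple R -> R) : (forall z, 0 < r z) ->
  mu.-integrable setT (KL_integrand p r) -> mu.-integrable setT (KL_integrand q r) ->
  mu.-integrable setT (KL_integrand p m) -> mu.-integrable setT (KL_integrand q m) ->
  KL mu m r =
  ((a%:E * KL mu p r + (1 - a)%:E * KL mu q r) -
   (a%:E * KL mu p m + (1 - a)%:E * KL mu q m))%E.
Proof.
move=> r0 ipr iqr ipm iqm; rewrite /KL -!integral_combination //.
rewrite -integralB //; last 2 first.
- by apply: integrableD => //; exact: integrableZl.
- by apply: integrableD => //; exact: integrableZl.
by apply: eq_integral => z _; rewrite KL_integrand_mixture.
Qed.

End MixtureIntegrals.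

Theorem proposition5 (R : realType) (dX dZ dU k : nat)
  (muX : {measure set (dX.-tuple R) -> \bar R})
  (muZ : {measure set (dZ.-tuple R) -> \bar R})
  (peps : dX.-tuple R -> R)
  (f : dZ.-tuple R -> dX.-tuple R)
  (T : 'I_dZ -> R -> k.-tuple R) (lam : 'I_dZ -> dU.-tuple R -> k.-tuple R)
  (A : dU.-tuple R -> R) (B : R -> R)
  (Phi : Type)
  (qenc : Phi -> dX.-tuple R -> dZ.-tuple R -> R)
  (qpost : Phi -> dX.-tuple R -> dU.-tuple R -> dZ.-tuple R -> R)
  (phi : Phi) (x : dX.-tuple R) (u : dU.-tuple R) (alpha : R) :
  (dZ < dX)%N ->
  is_lebesgue muX -> is_lebesgue muZ ->
  is_density muX peps ->
  (forall u', is_density muZ (prior_density T lam A B u')) ->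
  (forall x', is_density muZ (qenc phi x')) ->
  (forall x' u', is_density muZ (qpost phi x' u')) ->
  0 <= alpha <= 1 ->
  (* all expectations and divergences appearing are finite *)
  (forall a, a \in [:: alpha; 1; 0] ->
     muZ.-integrable setT
       (expect_integrand (mixture a (qenc phi x) (qpost phi x u))
          (fun z => elog (decoder_density peps f x z))) /\
     muZ.-integrable setT
       (KL_integrand (mixture a (qenc phi x) (qpost phi x u))
          (prior_density T lam A B u))) ->
  muZ.-integrable setT
    (KL_integrand (qenc phi x) (mixture (1 - (1 - alpha)) (qenc phi x) (qpost phi x u))) ->
  muZ.-integrable setT
    (KL_integrand (qpost phi x u) (mixture (1 - alpha) (qpost phi x u) (qenc phi x))) ->
  ELBO muZ peps f T lam A B (qenc phi x) (qpost phi x u) alpha x u =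
  (alpha%:E * ELBO muZ peps f T lam A B (qenc phi x) (qpost phi x u) 1 x u
   + (1 - alpha)%:E * ELBO muZ peps f T lam A B (qenc phi x) (qpost phi x u) 0 x u
   + alpha%:E * Dskew muZ (1 - alpha) (qenc phi x) (qpost phi x u)
   + (1 - alpha)%:E * Dskew muZ alpha (qpost phi x u) (qenc phi x))%E.
Proof.
move=> _ _ _ _ _ qenc_dens qpost_dens a01 integrable_terms iDp iDq.
set p := qenc phi x; set q := qpost phi x u.
have p0 : forall z, 0 <= p z by case: (qenc_dens x).
have q0 : forall z, 0 <= q z by case: (qpost_dens x u).
have [|iEp iKp] := integrable_terms 1; first by rewrite !inE eqxx orbT.
have [|iEq iKq] := integrable_terms 0; first by rewrite !inE eqxx !orbT.
rewrite mixture1 in iEp iKp; rewrite mixture0 in iEq iKq.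
rewrite mixture1B in iDp; rewrite mixtureC in iDq.
rewrite /ELBO /Dskew mixture1 mixture0 mixture1B mixtureC.
rewrite expect_mixture // KL_mixture //; last exact: prior_density_gt0.
by apply: fin_num_combinationB; exact: integrable_fin_num.
Qed.
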